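(* Let $n\ge 1$, $\tau>0$, and $\mathbf{s}=[s_1,\dots,s_n]^T\in\mathbb{R}^n$. Let $A_{\mathbf{s}}[i,j]=|s_i-s_j|$ and let $\mathbb{1}$ be the all-ones vector in $\mathbb{R}^n$. Define the matrix $\widehat{P}_{\mathrm{sort}(\mathbf{s})}(\tau)\in\mathbb{R}^{n\times n}$ row by row by $$\widehat{P}_{\mathrm{sort}(\mathbf{s})}[i,:](\tau)=\mathrm{softmax}\Big[\big((n+1-2i)\mathbf{s}-A_{\mathbf{s}}\mathbb{1}\big)/\tau\Big],\qquad i=1,\dots,n,$$ i.e. $\widehat{P}_{\mathrm{sort}(\mathbf{s})}[i,j](\tau)=\dfrac{\exp\big(((n+1-2i)s_j-\sum_{k}|s_j-s_k|)/\tau\big)}{\sum_{l}\exp\big(((n+1-2i)s_l-\sum_{k}|s_l-s_k|)/\tau\big)}$. Then: (1) (Unimodality) If the entries of $\mathbf{s}$ are pairwise distinct, then for every $\tau>0$, $\widehat{P}_{\mathrm{sort}(\mathbf{s})}(\tau)$ is a unimodal row stochastic matrix, and the vector $\mathbf{u}$ with $u_i=\arg\max_j\widehat{P}_{\mathrm{sort}(\mathbf{s})}[i,j](\tau)$ satisfies $\mathbf{u}=\mathrm{sort}(\mathbf{s})$. (2) (Limiting behavior) If the entries of $\mathbf{s}$ are drawn independently from a distribution on $\mathbb{R}$ that is absolutely continuous with respect to Lebesgue measure, then almost surely, for every $i\in\{1,\dots,n\}$, $$\lim_{\tau\to0^+}\widehat{P}_{\mathrm{sort}(\mathbf{s})}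[i,:](\tau)=P_{\mathrm{sort}(\mathbf{s})}[i,:].$$
   Context: For $\mathbf{s}\in\mathbb{R}^n$, $\mathrm{sort}(\mathbf{s})$ is the permutation $\mathbf{z}$ of $\{1,\dots,n\}$ listing indices in order of decreasing value of $s$ ($z_1$ is the index of the largest entry, etc.). The permutation matrix $P_{\mathbf{z}}$ has $P_{\mathbf{z}}[i,j]=1$ iff $j=z_i$ and $0$ otherwise. An $n\times n$ matrix $U$ is unimodal row stochastic if (i) $U[i,j]\ge0$ for all $i,j$; (ii) $\sum_j U[i,j]=1$ for all $i$; (iii) the vector $\mathbf{u}$ with $u_i=\arg\max_j U[i,j]$ (each row having a unique maximizer) is a permutation of $\{1,\dots,n\}$. *)

From HB Require Import structures.
From mathcomp Require Import all_boot all_order all_algebra.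
From mathcomp Require Import all_classical all_reals all_analysis.
Set Implicit Arguments. Unset Strict Implicit. Unset Printing Implicit Defensive.
Import Order.TTheory GRing.Theory Num.Theory.
Import numFieldNormedType.Exports.
Local Open Scope classical_set_scope.
Local Open Scope ring_scope.

(* Indices {1..n} are represented 0-based by 'I_n. *)

(* sort(s): the list of indices in order of decreasing value of s
   (stable sort; for pairwise distinct entries this is the unique such list). *)
Definition sort_list (R : realType) (n : nat) (s : 'I_n -> R) : seq 'I_n :=
  sort (fun a b => s b <= s a) (enum 'I_n).

(* z_i : the i-th entry of sort(s) (0-based; the default is irrelevant
   since i < n = size (sort_list s)). *)
Definition sort_perm (R : realType) (n : nat) (s : 'I_n -> R) (i : 'I_n) : 'I_n :=
  nth i (sort_list s) i.

Definition perm_matrix_of (R : realType) (n : nat) (z : 'I_n -> 'I_n) : 'M[R]_n :=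
  \matrix_(i, j) (if j == z i then 1 else 0).

Definition As1 (R : realType) (n : nat) (s : 'I_n -> R) (j : 'I_n) : R :=
  \sum_(k < n) `|s j - s k|.

(* The relaxed sorting matrix.  With 0-based row index i (paper's row i+1),
   n + 1 - 2(i+1) = n - 1 - 2 i. *)
Definition Phat (R : realType) (n : nat) (s : 'I_n -> R) (tau : R) : 'M[R]_n :=
  \matrix_(i, j)
    (expR (((n%:R - 1 - 2 * i%:R) * s j - As1 s j) / tau) /
     \sum_(l < n) expR (((n%:R - 1 - 2 * i%:R) * s l - As1 s l) / tau)).

Definition row_unique_argmax (R : realType) (n : nat) (U : 'M[R]_n) (i j : 'I_n) : Prop :=
  forall k, k != j -> U i k < U i j.

Definition unimodal_row_stochastic (R : realType) (n : nat) (U : 'M[R]_n) : Prop :=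
  [/\ (forall i j, 0 <= U i j),
      (forall i, \sum_(j < n) U i j = 1) &
      exists u : 'I_n -> 'I_n,
        (forall i, row_unique_argmax U i (u i)) /\ injective u].

Definition mutually_independent d (T : measurableType d) (R : realType)
  (P : probability T R) (n : nat) (X : 'I_n -> {RV P >-> R}) : Prop :=
  forall B : 'I_n -> set R, (forall i, measurable (B i)) ->
    P (\bigcap_(i in [set: 'I_n]) (X i @^-1` B i))%classic =
    (\prod_(i < n) P (X i @^-1` B i))%E.

(* Row i of [Phat s tau] is the softmax at temperature tau of the score
   v |-> (n - 1 - 2 i) v - sum_k |v - s_k|, evaluated at the entries of s.
   The score is concave and piecewise linear, with slope
   (n - 1 - 2 i) + #{k | s_k < v} - #{k | s_k > v}; for distinct entries this
   slope changes sign exactly at the (i+1)-th largest entry, which is therefore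
   the unique maximizer of the row.  As tau -> 0+ the softmax concentrates on
   that maximizer, so the limit holds at every sample with distinct entries.
   Ties are null events: two independent coordinates have the product law as
   joint law (the two agree on rectangles), and under it the diagonal has mass
   int P(X_b = x) dP_{X_a}(x) = 0, since absolutely continuous laws have no
   atoms. *)

From HB Require Import structures.
From mathcomp Require Import all_boot all_order all_algebra.
From mathcomp Require Import all_classical all_reals all_analysis.
From mathcomp Require Import ring lra.
Set Implicit Arguments. Unset Strict Implicit. Unset Printing Implicit Defensive.
Import Order.TTheory GRing.Theory Num.Theory.
Import numFieldNormedType.Exports.
Local Open Scope classical_set_scope.
Local Open Scope ring_scope.

Lemma expR_div_cvg0 (R : realType) (c : R) : c < 0 ->
  expR (c / tau) @[tau --> (0:R)^'+] --> 0.
Proof.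
move=> c_lt0.
have inv_cvgy : tau^-1 @[tau --> (0:R)^'+] --> +oo.
  apply/(cvgrVy (f := id)); first exact: nbhs_right_gt.
  exact: cvg_at_right_filter cvg_id.
have Nc_div_cvgy : - c / tau @[tau --> (0:R)^'+] --> +oo.
  by apply: gt0_cvgMry; rewrite ?oppr_gt0.
have -> : (fun tau => expR (c / tau)) = (fun x => expR (- x)) \o (fun tau => - c / tau).
  by apply/funext => tau /=; rewrite mulNr opprK.
apply: cvg_comp Nc_div_cvgy _; exact: cvgr_expR.
Qed.

Lemma cvg_sum (T : Type) (F : set_system T) (FF : Filter F) (K : numFieldType)
    (V : normedModType K) (J : Type) (r : seq J) (f : J -> T -> V) (l : J -> V) :
  (forall j, f j x @[x --> F] --> l j) ->
  \sum_(j <- r) f j x @[x --> F] --> \sum_(j <- r) l j.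
Proof.
move=> f_cvg; elim: r => [|j r IHr].
  by rewrite big_nil; under eq_fun do rewrite big_nil; exact: cvg_cst.
by rewrite big_cons; under eq_fun do rewrite big_cons; exact: cvgD.
Qed.

Section Softmax.
Variables (R : realType) (n : nat) (g : 'I_n -> R).

Definition softmax (tau : R) (j : 'I_n) : R :=
  expR (g j / tau) / \sum_(l < n) expR (g l / tau).

Lemma softmax_den_gt0 (tau : R) (j : 'I_n) : 0 < \sum_(l < n) expR (g l / tau).
Proof.
rewrite (bigD1 j) //=; apply: ltr_pwDl; first exact: expR_gt0.
by apply: sumr_ge0 => l _; exact: expR_ge0.
Qed.

Lemma softmax_ge0 tau j : 0 <= softmax tau j.
Proof. by rewrite divr_ge0 ?expR_ge0 // ltW // (softmax_den_gt0 _ j). Qed.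

Lemma softmax_sum1 tau : (0 < n)%N -> \sum_(j < n) softmax tau j = 1.
Proof.
move=> n_gt0; rewrite -mulr_suml divff //.
by rewrite gt_eqF // (softmax_den_gt0 _ (Ordinal n_gt0)).
Qed.

Lemma softmax_lt tau k j : 0 < tau -> g k < g j -> softmax tau k < softmax tau j.
Proof.
move=> tau_gt0 gkj; rewrite ltr_pM2r ?invr_gt0 ?(softmax_den_gt0 _ j) //.
by rewrite ltr_expR ltr_pM2r ?invr_gt0.
Qed.

Lemma softmax_shift (c tau : R) j :
  softmax tau j = expR ((g j - c) / tau) / \sum_(l < n) expR ((g l - c) / tau).
Proof.
have split_exp l : expR (g l / tau) = expR ((g l - c) / tau) * expR (c / tau).
  by rewrite -expRD -mulrDl subrK.
rewrite /softmax split_exp; under eq_bigr do rewrite split_exp.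
by rewrite -mulr_suml invfM mulrACA mulfV ?mulr1 // gt_eqF ?expR_gt0.
Qed.

Lemma softmax_cvg (j0 : 'I_n) : (forall k, k != j0 -> g k < g j0) ->
  forall j, softmax tau j @[tau --> (0:R)^'+] --> (if j == j0 then 1 else 0 : R).
Proof.
move=> j0_max j; under eq_fun do rewrite (softmax_shift (g j0)).
have exp_cvg l :
    expR ((g l - g j0) / tau) @[tau --> (0:R)^'+] --> (if l == j0 then 1 else 0 : R).
  have [->|lj0] := eqVneq l j0.
    by under eq_fun do rewrite subrr mul0r expR0; exact: cvg_cst.
  by apply: expR_div_cvg0; rewrite subr_lt0 j0_max.
have sum_indicator : \sum_(l < n) (if l == j0 then 1 else 0) = 1 :> R.
  by rewrite (bigD1 j0) //= eqxx big1 ?addr0 // => l /negbTE ->.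
rewrite -[X in nbhs X]divr1 -[X in _ / X]sum_indicator.
apply: cvgM; first exact: exp_cvg.
by apply: cvgV; [rewrite sum_indicator oner_neq0 | exact: cvg_sum].
Qed.

End Softmax.

Section SortPerm.
Variables (R : realType) (n : nat) (s : 'I_n -> R).

Local Notation L := (sort_list s).

Lemma size_sort_list : size L = n.
Proof. by rewrite size_sort size_enum_ord. Qed.

Lemma uniq_sort_list : uniq L.
Proof. by rewrite sort_uniq enum_uniq. Qed.

Lemma sort_perm_inj : injective (sort_perm s).
Proof.
move=> i1 i2; rewrite /sort_perm (set_nth_default i1 i2) ?size_sort_list //.
by move/eqP; rewrite nth_uniq ?size_sort_list ?uniq_sort_list // => /eqP/val_inj.
Qed.

Lemma sort_list_nth_le (x0 : 'I_n) (j k : nat) :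
  (j <= k)%N -> (k < n)%N -> s (nth x0 L k) <= s (nth x0 L j).
Proof.
move=> jk kn; apply: (sorted_leq_nth (leT := fun a b => s b <= s a)) => //.
- by move=> b a c ab bc; exact: le_trans bc ab.
- by apply: sort_sorted => a b; exact: le_total.
- by rewrite inE size_sort_list (leq_ltn_trans jk kn).
- by rewrite inE size_sort_list.
Qed.

Lemma card_sort_perm_le (i : 'I_n) :
  (i.+1 <= #|[pred q | (s (sort_perm s i) <= s q)%R]|)%N.
Proof.
have i_lt := ltn_ord i.
have head_ge : all [pred q | s (sort_perm s i) <= s q] (take i.+1 L).
  apply/(all_nthP i) => j; rewrite size_takel ?size_sort_list // => j_le.
  by rewrite nth_take //= sort_list_nth_le.
rewrite -[X in (X <= _)%N](size_takel (_ : i.+1 <= size L)%N) ?size_sort_list //.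
rewrite -(card_uniqP (take_uniq _ uniq_sort_list)).
by apply/subset_leq_card/fintype.subsetP => q /(allP head_ge).
Qed.

Lemma card_sort_perm_ge (i : 'I_n) :
  (n - i <= #|[pred q | (s q <= s (sort_perm s i))%R]|)%N.
Proof.
have tail_le : all [pred q | s q <= s (sort_perm s i)] (drop i L).
  apply/(all_nthP i) => j; rewrite size_drop size_sort_list => j_lt.
  by rewrite nth_drop /= sort_list_nth_le ?leq_addr // -ltn_subRL.
rewrite -[n in (n - i)%N]size_sort_list -size_drop.
rewrite -(card_uniqP (drop_uniq _ uniq_sort_list)).
by apply/subset_leq_card/fintype.subsetP => q /(allP tail_le).
Qed.

End SortPerm.

Section RankScore.
Variables (R : realType) (n : nat) (s : 'I_n -> R).

Definition rank_score (c v : R) : R := c * v - \sum_(k < n) `|v - s k|.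

Definition row_coef (i : 'I_n) : R := n%:R - 1 - 2 * i%:R.

Lemma Phat_softmax tau i j :
  Phat s tau i j = softmax (fun l => rank_score (row_coef i) (s l)) tau j.
Proof. by rewrite mxE. Qed.

Lemma sum_if_card (P : pred 'I_n) (a b : R) :
  \sum_(q < n) (if P q then a else b) = a * #|P|%:R + b * (n%:R - #|P|%:R).
Proof.
rewrite (bigID P) /= (eq_bigr (fun _ => a)); last by move=> q ->.
rewrite [X in _ + X](eq_bigr (fun _ => b)); last by move=> q /negbTE ->.
have cardCP : #|[predC P]|%:R = n%:R - #|P|%:R :> R.
  by apply/eqP; rewrite eq_sym subr_eq -natrD addnC cardC card_ord.
by rewrite !sumr_const -cardCP !mulr_natr.
Qed.

Lemma sum_dist_diff_le (x y : R) : y <= x ->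
  \sum_(k < n) (`|x - s k| - `|y - s k|) <=
    (x - y) * (n%:R - 2 * #|[pred q | x <= s q]|%:R).
Proof.
move=> yx; have -> : (x - y) * (n%:R - 2 * #|[pred q | x <= s q]|%:R) =
    \sum_(q < n) if x <= s q then y - x else x - y by rewrite sum_if_card; ring.
apply: ler_sum => q _; case: ifP => [xs|_].
  by rewrite !ler0_norm ?subr_le0 ?(le_trans yx) //; lra.
by have := ler_distD y x (s q); rewrite [`|x - y|]ger0_norm ?subr_ge0 //; lra.
Qed.

Lemma sum_dist_diff_ge (x y : R) : y <= x ->
  (x - y) * (2 * #|[pred q | s q <= y]|%:R - n%:R) <=
    \sum_(k < n) (`|x - s k| - `|y - s k|).
Proof.
move=> yx; have -> : (x - y) * (2 * #|[pred q | s q <= y]|%:R - n%:R) =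
    \sum_(q < n) if s q <= y then x - y else y - x by rewrite sum_if_card; ring.
apply: ler_sum => q _; case: ifP => [sy|_].
  by rewrite !ger0_norm ?subr_ge0 ?(le_trans sy) //; lra.
have := ler_distD x y (s q).
by rewrite (distrC y x) [`|x - y|]ger0_norm ?subr_ge0 //; lra.
Qed.

Lemma rank_score_argmax (i k : 'I_n) : injective s -> k != sort_perm s i ->
  rank_score (row_coef i) (s k) < rank_score (row_coef i) (s (sort_perm s i)).
Proof.
move=> s_inj k_neq; set z := sort_perm s i.
have i_lt : (i < n)%N := ltn_ord i.
have [skz|szk] : s k < s z \/ s z < s k.
  by apply/orP; rewrite -neq_lt; apply: contra k_neq => /eqP/s_inj ->.
- have S_le := sum_dist_diff_le (ltW skz).
  set A := #|_|%:R in S_le.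
  have gap : 0 <= (s z - s k) * (A - i.+1%:R).
    by apply: mulr_ge0; rewrite subr_ge0 ?ler_nat ?card_sort_perm_le // ltW.
  rewrite /rank_score /row_coef -natr1 sumrB in gap S_le *; nra.
- have S_ge := sum_dist_diff_ge (ltW szk).
  set B := #|_|%:R in S_ge.
  have gap : 0 <= (s k - s z) * (B - (n - i)%:R).
    by apply: mulr_ge0; rewrite subr_ge0 ?ler_nat ?card_sort_perm_ge // ltW.
  rewrite /rank_score /row_coef natrB 1?ltnW // sumrB in gap S_ge *; nra.
Qed.

End RankScore.

Section Phat.
Variables (R : realType) (n : nat) (s : 'I_n -> R).
Hypothesis s_inj : injective s.

Lemma Phat_row_argmax (tau : R) (i : 'I_n) : 0 < tau ->
  row_unique_argmax (Phat s tau) i (sort_perm s i).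
Proof.
move=> tau_gt0 k k_neq; rewrite !Phat_softmax.
by apply: softmax_lt => //; exact: rank_score_argmax.
Qed.

Lemma Phat_unimodal (tau : R) : 0 < tau -> unimodal_row_stochastic (Phat s tau).
Proof.
move=> tau_gt0; split.
- by move=> i j; rewrite Phat_softmax softmax_ge0.
- move=> i; under eq_bigr do rewrite Phat_softmax.
  by rewrite softmax_sum1 // (leq_ltn_trans (leq0n i) (ltn_ord i)).
- exists (sort_perm s); split; last exact: sort_perm_inj.
  by move=> i; exact: Phat_row_argmax.
Qed.

Lemma Phat_cvg_perm_matrix (i j : 'I_n) :
  Phat s tau i j @[tau --> (0:R)^'+] --> perm_matrix_of R (sort_perm s) i j.
Proof.
rewrite mxE; under eq_fun do rewrite Phat_softmax.
by apply: softmax_cvg => k; exact: rank_score_argmax.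
Qed.

End Phat.

Lemma measurable_diagonal (R : realType) : measurable [set p : R * R | p.1 = p.2].
Proof.
have mB : measurable_fun setT (fun p : R * R => p.1 - p.2).
  exact: measurable_realfun.measurable_funB measurable_fst measurable_snd.
have := mB measurableT [set 0] (measurable_set1 0).
rewrite setTI; congr measurable; apply/seteqP; split => p /=.
  by move/eqP; rewrite subr_eq0 => /eqP.
by move=> ->; rewrite subrr.
Qed.

Section IndependentTies.
Context d (T : measurableType d) (R : realType) (P : probability T R).
Variables Y1 Y2 : {RV P >-> R}.
Hypothesis indep12 : forall A B : set R, measurable A -> measurable B ->
  P (Y1 @^-1` A `&` Y2 @^-1` B) = (P (Y1 @^-1` A) * P (Y2 @^-1` B))%E.
Hypothesis Y2_no_atom : forall x : R, distribution P Y2 [set x] = 0%E.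

Let Y12 (t : T) : R * R := (Y1 t, Y2 t).
Let mY12 : measurable_fun setT Y12.
Proof. exact: measurable_fun_pair. Qed.
HB.instance Definition _ := isMeasurableFun.Build _ _ _ _ Y12 mY12.

Lemma measurable_ties : measurable [set t | Y1 t = Y2 t].
Proof. by have := mY12 measurableT (@measurable_diagonal R); rewrite setTI. Qed.

Lemma independent_ties_null : P [set t | Y1 t = Y2 t] = 0%E.
Proof.
have joint : distribution P Y12 [set p | p.1 = p.2] =
    (distribution P Y1 \x distribution P Y2)%E [set p | p.1 = p.2].
  symmetry; apply: product_measure_unique.
  - exact: indep12.
  - exact: measurable_diagonal.
change (distribution P Y12 [set p | p.1 = p.2] = 0%E).
rewrite joint /product_measure1 /=.
have sec : forall x : R, xsection [set p : R * R | p.1 = p.2] x = [set x].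
  by move=> x; apply/seteqP; split => y; rewrite /xsection /= inE.
under eq_integral => x _ do rewrite /= sec Y2_no_atom.
exact: integral0.
Qed.

End IndependentTies.

Lemma distribution_set1_eq0 d (T : measurableType d) (R : realType)
    (P : probability T R) (Y : {RV P >-> R}) :
  distribution P Y `<< (@lebesgue_measure R) ->
  forall x, distribution P Y [set x] = 0%E.
Proof.
move=> Y_ac x; apply/measure0_null_setP/Y_ac => //.
by apply/measure0_null_setP => //; exact: lebesgue_measure_set1.
Qed.

Section MutuallyIndependent.
Context d (T : measurableType d) (R : realType) (P : probability T R).
Variables (n : nat) (X : 'I_n -> {RV P >-> R}).
Hypothesis X_indep : mutually_independent X.

Lemma mutually_independent2 (a b : 'I_n) : a != b ->
  forall A B : set R, measurable A -> measurable B ->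
  P (X a @^-1` A `&` X b @^-1` B) = (P (X a @^-1` A) * P (X b @^-1` B))%E.
Proof.
move=> ab A B mA mB.
pose C i := if i == a then A else if i == b then B else setT.
have mC i : measurable (C i) by rewrite /C; case: eqP => _ //; case: eqP.
have Cb : C b = B by rewrite /C eq_sym (negbTE ab) eqxx.
have := X_indep mC.
have -> : \bigcap_(i in [set: 'I_n]) X i @^-1` C i = X a @^-1` A `&` X b @^-1` B.
  apply/seteqP; split => [t Ct|t [Xa Xb] i _].
    by split; [have := Ct a I; rewrite /C eqxx | have := Ct b I; rewrite Cb].
  by rewrite /C; case: eqVneq => [->//|_]; case: eqVneq => [->//|_].
move=> ->; rewrite (bigD1 a) //= (bigD1 b) 1?eq_sym //= big1 ?mule1.
  by rewrite Cb /C eqxx.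
move=> i /andP[ia ib]; rewrite /C (negbTE ia) (negbTE ib) preimage_setT.
exact: probability_setT.
Qed.

Lemma ae_injective : (forall i, distribution P (X i) `<< (@lebesgue_measure R)) ->
  {ae P, forall t, injective (fun k => X k t)}.
Proof.
move=> X_ac.
have ae_neq a b : {ae P, forall t, a != b -> X a t != X b t}.
  have [<-|ab] := eqVneq a b; first by apply: nearW => t; rewrite eqxx.
  exists [set t | X a t = X b t]; split.
  - exact: measurable_ties.
  - apply: independent_ties_null; first exact: mutually_independent2.
    exact: distribution_set1_eq0.
  - by move=> t /= Xneq; apply/eqP/negPn/negP => Xab; apply: Xneq.
have : {ae P, forall t a b, a != b -> X a t != X b t}.
  by apply: filter_forall => a; apply: filter_forall => b; exact: ae_neq.
apply: filterS => t X_neq a b /eqP; apply: contraTeq; exact: X_neq.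
Qed.

End MutuallyIndependent.

Theorem theorem1 (R : realType) (n : nat) (hn : (1 <= n)%N) :
  (* (1) unimodality *)
  (forall (s : 'I_n -> R), injective s ->
     forall tau : R, 0 < tau ->
       unimodal_row_stochastic (Phat s tau) /\
       (forall i, row_unique_argmax (Phat s tau) i (sort_perm s i)))
  /\
  (* (2) limiting behaviour, almost surely for i.i.d. absolutely continuous entries *)
  (forall (d : measure_display) (T : measurableType d) (P : probability T R)
          (X : 'I_n -> {RV P >-> R}),
     mutually_independent X ->
     (forall i j, distribution P (X i) = distribution P (X j)) ->
     (forall i, distribution P (X i) `<< (@lebesgue_measure R)) ->
     {ae P, forall t : T,
        forall i j : 'I_n,
          Phat (fun k => X k t) tau i j @[tau --> (0:R)^'+] -->
            perm_matrix_of R (sort_perm (fun k => X k t)) i j}).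
Proof.
split=> [s s_inj tau tau_gt0 | d T P X X_indep _ X_ac].
  split; first exact: Phat_unimodal.
  by move=> i; exact: Phat_row_argmax.
apply: filterS (ae_injective X_indep X_ac) => t t_inj i j.
exact: Phat_cvg_perm_matrix.
Qed.
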